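(* For every $\eta,\varepsilon\in(0,1/3]$ (and $d\in\mathbb{N}$) there is $N=N(\eta,\varepsilon)\in\mathbb{N}$ such that for infinitely many $m\in\mathbb{N}$ the following holds: there exists a set $B\subset\{-m,\dots,m-1\}^d$ with $|B|\le\eta m^d$ such that $$\bigl|(A+B)\cap[m]^d\bigr|\ge(1-\varepsilon)m^d\quad\text{for all }A\subset[m]^d\text{ with }|A|\ge N,$$ where sums are taken in $\mathbb{Z}^d$.
   Context: $[m]=\{0,1,\dots,m-1\}$; $|\cdot|$ denotes cardinality. *)

From HB Require Import structures.
From mathcomp Require Import all_boot all_order all_algebra.
From mathcomp Require Import reals.
Set Implicit Arguments. Unset Strict Implicit. Unset Printing Implicit Defensive.
Import Order.TTheory GRing.Theory Num.Theory.

Definition cube (d m : nat) : finType := {ffun 'I_d -> 'I_m}.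

(* The shifted cube {-m,...,m-1}^d is encoded by {ffun 'I_d -> 'I_(2*m)}:
   a point b stands for the integer vector (i |-> b i - m). *)
Definition scube (d m : nat) : finType := {ffun 'I_d -> 'I_(2 * m)}.

Definition scube_val d m (b : scube d m) (i : 'I_d) : int :=
  (nat_of_ord (b i))%:Z - m%:Z.

Definition sumset_cap_cube d m (A : {set cube d m}) (B : {set scube d m})
  : {set cube d m} :=
  [set x : cube d m | [exists a in A, exists b in B,
     [forall i : 'I_d, ((nat_of_ord (x i))%:Z == (nat_of_ord (a i))%:Z + scube_val b i)%R]]].

From HB Require Import structures.
From mathcomp Require Import all_boot all_order all_algebra.
From mathcomp Require Import zify ring lra.
From mathcomp Require Import reals.
Set Implicit Arguments. Unset Strict Implicit. Unset Printing Implicit Defensive.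
Import Order.TTheory GRing.Theory Num.Theory.

(* Take m = p ^ 2 with p prime and read every coordinate of [m]^d as a pair of
   base-p digits, in either order.  For a width c of order eta p, the band
   W = {(s, t) : t - s ^ 2 mod p < c} has p c points, and two translates of W
   with different first coordinates meet in exactly c ^ 2 points, since their
   parabolas differ by an invertible affine function of s.  B consists of the
   differences whose digits in one coordinate lie in W up to multiples of p, so
   |B| = O_d(c p m ^ (d - 1)) <= eta m ^ d, and A + B contains, for each a in A,
   the set S(a) of the x whose digits in that coordinate lie in a + W.  When
   |A| >= L ^ (2 d), some coordinate and digit take L distinct values on A; the
   corresponding S(a) have p c m ^ (d - 1) points each and pairwise intersections
   of c ^ 2 m ^ (d - 1) points, so by Cauchy-Schwarz they cover a fraction at
   least L c / (p + L c) >= 1 - eps of the cube. *)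

Lemma card_ord_lt n c : c <= n -> #|[set r : 'I_n | r < c]| = c.
Proof.
move=> le_cn.
have inj_widen : injective (widen_ord le_cn) by move=> a b /(congr1 val) /= /ord_inj.
rewrite -[RHS](card_ord c) -(card_imset _ inj_widen).
apply: eq_card => r; rewrite inE; apply/idP/imsetP => [lt_rc | [j _ ->]].
  by exists (Ordinal lt_rc) => //; apply: val_inj.
by rewrite /= ltn_ord.
Qed.

Lemma card_ffun_coord (I T : finType) (i : I) (P : pred T) :
  #|[set x : {ffun I -> T} | P (x i)]| = #|[set w | P w]| * #|T| ^ #|I|.-1.
Proof.
pose F j := if j == i then mem P else mem (@predT T).
have -> : [set x : {ffun I -> T} | P (x i)] = [set x | x \in family F].
  apply/setP => x; rewrite !inE; apply/idP/familyP => [Px j | /(_ i)].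
    by rewrite /F; case: eqP => [->|].
  by rewrite /F eqxx.
rewrite cardsE card_family foldrE big_map big_enum /= (bigD1 i) //= /F eqxx cardsE.
rewrite (eq_bigr (fun _ => #|T|)) => [|j /negbTE ->]; last by rewrite cardT.
by rewrite prod_nat_const cardC1.
Qed.

Lemma exists_large_coord_image (I T : finType) (A : {set {ffun I -> T}}) L :
  0 < #|I| -> L ^ #|I| <= #|A| -> exists i, L <= #|[set a i | a : {ffun I -> T} in A]|.
Proof.
move=> I_gt0 large_A; have [i0 _] := card_gt0P I_gt0.
apply/existsP; apply: contraLR large_A; rewrite negb_exists -ltnNge => /forallP small.
have L_gt0 : 0 < L by case: L small => // /(_ i0).
pose F i := mem [set a i | a : {ffun I -> T} in A].
apply: leq_ltn_trans (_ : #|A| <= \prod_i #|F i|) _.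
  have A_sub : A \subset [set x | x \in family F].
    by apply/subsetP => x Ax; rewrite inE; apply/familyP => i; apply: imset_f.
  by have := subset_leq_card A_sub; rewrite cardsE card_family foldrE big_map big_enum.
apply: leq_ltn_trans (_ : _ <= L.-1 ^ #|I|) _; last by rewrite ltn_exp2r // ltn_predL.
rewrite -prod_nat_const; apply: leq_prod => i _.
by rewrite -ltnS prednK // ltnNge small.
Qed.

Lemma card_bigcup_leq_sum (I T : finType) (P : pred I) (F : I -> {set T}) :
  #|\bigcup_(i | P i) F i| <= \sum_(i | P i) #|F i|.
Proof.
elim/big_ind2: _ => [|X1 n1 X2 n2 le1 le2|//]; first by rewrite cards0.
exact: leq_trans (leq_card_setU _ _).1 (leq_add le1 le2).
Qed.

Lemma exists_injective_subset (T T' : finType) (g : T -> T') (A : {set T}) :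
  exists A' : {set T}, [/\ A' \subset A, {in A' &, injective g} & g @: A' = g @: A].
Proof.
pose rep y := [pick a in A | g a == y].
have sub_A : [set a in A | rep (g a) == Some a] \subset A.
  by apply/subsetP => a; rewrite inE => /andP[].
exists [set a in A | rep (g a) == Some a]; split=> //.
  move=> a a'; rewrite !inE => /andP[_ /eqP rep_a] /andP[_ /eqP rep_a'] eq_g.
  by apply: Some_inj; rewrite -rep_a -rep_a' eq_g.
apply/eqP; rewrite eqEsubset imsetS //=.
apply/subsetP => _ /imsetP[a Aa ->].
move: (erefl (rep (g a))); rewrite {2}/rep.
case: pickP => [b /andP[Ab /eqP gb] rep_ga | /(_ a)]; last by rewrite Aa eqxx.
by apply/imsetP; exists b; rewrite ?inE ?Ab ?gb ?rep_ga ?eqxx.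
Qed.

Lemma sqr_sum_leq_card_mul (T : finType) (U : {set T}) (r : T -> nat) :
  (\sum_(z in U) r z) ^ 2 <= #|U| * \sum_(z in U) r z ^ 2.
Proof.
set S2 := \sum_(z in U) r z ^ 2.
have double_sum : \sum_(z in U) \sum_(z' in U) (r z ^ 2 + r z' ^ 2) = 2 * (#|U| * S2).
  rewrite (eq_bigr (fun z => #|U| * r z ^ 2 + S2)) => [|z _]; last first.
    by rewrite big_split /= sum_nat_const.
  by rewrite big_split /= sum_nat_const -big_distrr /= -/S2 mulnC; lia.
rewrite -(@leq_pmul2l 2) // -double_sum -mulnn big_distrl big_distrr /=.
apply: leq_sum => z _; rewrite big_distrr /= big_distrr /=; apply: leq_sum => z' _.
exact: (nat_Cauchy _ _).1.
Qed.

Lemma leq_mul_ratio_mono a b p M U : a <= b -> b * M <= U * (p + b) -> a * M <= U * (p + a).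
Proof.
move=> le_ab le_b.
have [b0 | b_gt0] := posnP b; first by have -> : a = 0 by lia.
rewrite -(leq_pmul2l b_gt0).
have : a * (b * M) <= a * (U * (p + b)) by rewrite leq_mul2l le_b orbT.
nia.
Qed.

Section SecondMoment.

Variables (I T : finType) (V : {set I}) (S : I -> {set T}).

Let mult z := \sum_(v in V) (z \in S v : nat).

Let sum_bigcup (F : T -> nat) :
  (forall z, z \notin \bigcup_(v in V) S v -> F z = 0) ->
  \sum_(z in \bigcup_(v in V) S v) F z = \sum_z F z.
Proof.
move=> F0; rewrite [RHS](bigID (mem (\bigcup_(v in V) S v))) /=.
by rewrite [X in _ + X]big1 ?addn0.
Qed.

Let mult_out z : z \notin \bigcup_(v in V) S v -> mult z = 0.
Proof.
move=> zU; apply: big1 => v Vv; apply/eqP; rewrite eqb0.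
by apply: contra zU => Svz; apply/bigcupP; exists v.
Qed.

Lemma sum_card_bigcup_mult :
  \sum_(z in \bigcup_(v in V) S v) mult z = \sum_(v in V) #|S v|.
Proof.
rewrite sum_bigcup // exchange_big; apply: eq_bigr => v _.
by rewrite -sum1_card [RHS]big_mkcond; apply: eq_bigr => z _; case: (z \in S v).
Qed.

Lemma sum_card_bigcup_sqr_mult :
  \sum_(z in \bigcup_(v in V) S v) mult z ^ 2 =
  \sum_(v in V) \sum_(w in V) #|S v :&: S w|.
Proof.
rewrite sum_bigcup => [|z /mult_out ->] //.
rewrite (eq_bigr (fun z => \sum_(v in V) \sum_(w in V) (z \in S v :&: S w : nat))).
  rewrite exchange_big; apply: eq_bigr => v _; rewrite exchange_big.
  apply: eq_bigr => w _; rewrite -sum1_card [RHS]big_mkcond.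
  by apply: eq_bigr => z _; case: (z \in _).
move=> z _; rewrite /mult -mulnn big_distrl; apply: eq_bigr => v _.
rewrite big_distrr; apply: eq_bigr => w _.
by rewrite inE; case: (z \in S v); case: (z \in S w).
Qed.

Lemma card_bigcup_second_moment lam :
  {in V &, forall v w, v != w -> #|S v :&: S w| <= lam} ->
  (\sum_(v in V) #|S v|) ^ 2 <=
  #|\bigcup_(v in V) S v| * (\sum_(v in V) #|S v| + #|V| ^ 2 * lam).
Proof.
move=> small_cap.
rewrite -{1}sum_card_bigcup_mult; apply: leq_trans (sqr_sum_leq_card_mul _ _) _.
rewrite leq_mul2l sum_card_bigcup_sqr_mult -mulnn -mulnA -sum_nat_const -big_split.
apply/orP; right; apply: leq_sum => v Vv; rewrite (bigD1 v) //= setIid leq_add2l.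
apply: (@leq_trans (\sum_(w in V | w != v) lam)).
  by apply: leq_sum => w /andP[Vw ne_wv]; rewrite small_cap // eq_sym.
rewrite sum_nat_const leq_mul2r; apply/orP; right.
by apply: subset_leq_card; apply/subsetP => w /andP[].
Qed.

End SecondMoment.

Local Open Scope ring_scope.

Section ParabolaBand.

Variable q : nat.
Local Notation p := q.+1.

Definition pband (c : nat) (s t : int) : bool := ((t - s ^+ 2) %% p%:Z)%Z < c%:Z.

Lemma pband_shift c s t k l : pband c (s + k * p%:Z) (t + l * p%:Z) = pband c s t.
Proof.
rewrite /pband -(modzMDl (l - 2%:Z * s * k - k ^+ 2 * p%:Z) (t - s ^+ 2)).
by congr ((_ %% _)%Z < _); rewrite !expr2; ring.
Qed.

Definition modz_ord (x : int) : 'I_p := inord `|(x %% p%:Z)%Z|%N.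

Lemma modz_ordE x : (modz_ord x : nat)%:Z = (x %% p%:Z)%Z.
Proof.
have mod_ge0 : 0 <= (x %% p%:Z)%Z by apply: modz_ge0.
rewrite inordK ?gez0_abs // -ltz_nat gez0_abs //; exact: ltz_pmod.
Qed.

Lemma modz_ord_eq x y : modz_ord x = modz_ord y -> (p%:Z %| x - y)%Z.
Proof.
by move=> /(congr1 (fun r : 'I_p => (r : nat)%:Z)); rewrite !modz_ordE -eqz_mod_dvd => ->.
Qed.

Lemma modz_ord_small x :
  - p%:Z < x < p%:Z -> (modz_ord x : nat)%:Z = x + (nat_of_bool (x < 0))%:Z * p%:Z.
Proof.
move=> /andP[gt_x lt_x]; rewrite modz_ordE.
have [x_neg | x_ge0] := ltrP x 0; last by rewrite mul0r addr0 modz_small ?x_ge0.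
by rewrite mul1r -(modzMDl 1) mul1r addrC modz_small //; lia.
Qed.

Lemma dvdz_eq0 x : (p%:Z %| x)%Z -> - p%:Z < x < p%:Z -> x = 0.
Proof.
move=> /dvdzP[k ->] /andP[gt_kp lt_kp].
by case: (ltrgt0P k) => [k_gt0|k_lt0|->]; [nia | nia | rewrite mul0r].
Qed.

Lemma ord_dvdz_eq (u v : 'I_p) : (p%:Z %| (u : nat)%:Z - (v : nat)%:Z)%Z -> u = v.
Proof.
move=> /dvdz_eq0 uv0; apply: val_inj; apply/eqP; rewrite -eqz_nat -subr_eq0 uv0 //.
by have := ltn_ord u; have := ltn_ord v; lia.
Qed.

Definition band_at (c : nat) (z0 z : 'I_p * 'I_p) : bool :=
  pband c ((z.1 : nat)%:Z - (z0.1 : nat)%:Z) ((z.2 : nat)%:Z - (z0.2 : nat)%:Z).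

Lemma card_band_at c z0 : (c <= p)%N -> #|[set z | band_at c z0 z]| = (p * c)%N.
Proof.
move=> le_cp.
pose g (z : 'I_p * 'I_p) := (z.1, modz_ord
  ((z.2 : nat)%:Z - (z0.2 : nat)%:Z - ((z.1 : nat)%:Z - (z0.1 : nat)%:Z) ^+ 2)).
have g_inj : injective g.
  move=> [u v] [u' v'] [/= <- /modz_ord_eq dvd]; congr (_, _); apply: ord_dvdz_eq.
  by move: dvd; congr (_ %| _)%Z; ring.
have -> : [set z | band_at c z0 z] = g @^-1: setX [set: 'I_p] [set r : 'I_p | (r < c)%N].
  by apply/setP => z; rewrite !inE -ltz_nat modz_ordE.
by rewrite card_preimset // cardsX cardsT card_ord card_ord_lt.
Qed.

Hypothesis p_prime : prime p.
Hypothesis p_gt2 : (2 < p)%N.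

Lemma dvdz_prime_mulE x y : (p%:Z %| x * y)%Z = (p%:Z %| x)%Z || (p%:Z %| y)%Z.
Proof. by rewrite !dvdzE abszM Euclid_dvdM. Qed.

Lemma card_band_at_cap c z0 z1 : z0.1 != z1.1 -> (c <= p)%N ->
  #|[set z | band_at c z0 z && band_at c z1 z]| = (c * c)%N.
Proof.
move=> ne_z01 le_cp.
pose r (z0 z : 'I_p * 'I_p) := modz_ord
  ((z.2 : nat)%:Z - (z0.2 : nat)%:Z - ((z.1 : nat)%:Z - (z0.1 : nat)%:Z) ^+ 2).
pose g z := (r z0 z, r z1 z).
have g_inj : injective g.
  move=> [u v] [u' v'] [/modz_ord_eq dvd0 /modz_ord_eq dvd1].
  rewrite /= in dvd0 dvd1.
  (* The two parabolas differ by an affine function of slope 2 (z0.1 - z1.1). *)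
  have dvd_prod : (p%:Z %| (2%:Z * ((z0.1 : nat)%:Z - (z1.1 : nat)%:Z))
                           * ((u : nat)%:Z - (u' : nat)%:Z))%Z.
    by have := rpredB dvd0 dvd1; congr (_ %| _)%Z; ring.
  have eq_u : u = u'.
    have two_small : - p%:Z < 2 < p%:Z by lia.
    apply: ord_dvdz_eq; move: dvd_prod; rewrite !dvdz_prime_mulE -orbA.
    case/or3P=> [/dvdz_eq0/(_ two_small) // | /ord_dvdz_eq eq_z01 | //].
    by rewrite eq_z01 eqxx in ne_z01.
  subst u'; congr (_, _); apply: ord_dvdz_eq.
  by move: dvd0; congr (_ %| _)%Z; ring.
have -> : [set z | band_at c z0 z && band_at c z1 z] =
          g @^-1: setX [set r : 'I_p | (r < c)%N] [set r : 'I_p | (r < c)%N].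
  by apply/setP => z; rewrite !inE -!ltz_nat !modz_ordE.
by rewrite card_preimset // cardsX card_ord_lt.
Qed.

Definition digits (f : bool) (w : nat) : 'I_p * 'I_p :=
  let z := (inord (w %% p), inord (w %/ p)) in if f then (z.2, z.1) else z.

Definition undigits (f : bool) (s t : int) : int :=
  if f then t + p%:Z * s else s + p%:Z * t.

Lemma undigitsB f s t s' t' :
  undigits f s t - undigits f s' t' = undigits f (s - s') (t - t').
Proof. by case: f; rewrite /undigits; ring. Qed.

Lemma digitsK f w : (w < p * p)%N ->
  w%:Z = undigits f ((digits f w).1 : nat)%:Z ((digits f w).2 : nat)%:Z.
Proof.
move=> lt_w; have lo_lt : (w %% p < p)%N by rewrite ltn_pmod.
have hi_lt : (w %/ p < p)%N by rewrite ltn_divLR.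
rewrite {1}(divn_eq w p) mulnC addnC PoszD PoszM.
by case: f; rewrite /digits /undigits /= !inordK.
Qed.

Lemma digits_inj f : injective (fun w : 'I_(p * p) => digits f w).
Proof.
move=> w w' eq_d; apply: val_inj; apply/eqP.
by rewrite -eqz_nat (digitsK f (ltn_ord w)) (digitsK f (ltn_ord w')) eq_d.
Qed.

Lemma card_digits_preim f (P : pred ('I_p * 'I_p)) :
  #|[set w : 'I_(p * p) | P (digits f w)]| = #|[set z | P z]|.
Proof.
rewrite !cardsE (card_preim (@digits_inj f)); apply: eq_card => z /=.
rewrite !inE inj_card_onto //; first exact: digits_inj.
by rewrite card_prod !card_ord.
Qed.

Local Notation m := (p * p)%N.

Lemma exists_digit_transversal d (A : {set cube d m}) L : (0 < d)%N ->
  (L ^ (2 * d) <= #|A|)%N ->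
  exists i f (A' : {set cube d m}), [/\ A' \subset A, (L <= #|A'|)%N &
    {in A' &, forall a a' : cube d m, a != a' -> (digits f (a i)).1 != (digits f (a' i)).1}].
Proof.
move=> d_gt0 large_A.
pose phi (x : cube d m) : {ffun 'I_d * bool -> 'I_p} := [ffun j => (digits j.2 (x j.1)).1].
have phi_inj : injective phi.
  move=> x x' eq_phi; apply/ffunP => j; apply: val_inj; apply/eqP; rewrite -eqz_nat.
  have := congr1 (fun y : {ffun 'I_d * bool -> 'I_p} => (y (j, false), y (j, true))) eq_phi.
  rewrite !ffunE (digitsK false (ltn_ord (x j))) (digitsK false (ltn_ord (x' j))) /=.
  by case=> -> ->.
have [[i f] large_im] :
    exists j, (L <= #|[set y j | y : {ffun 'I_d * bool -> 'I_p} in phi @: A]|)%N.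
  apply: exists_large_coord_image; first by rewrite card_prod card_ord card_bool muln_gt0 d_gt0.
  by rewrite card_imset // card_prod card_ord card_bool mulnC.
have [A' [sub_A' inj_A' im_A']] := exists_injective_subset (fun x => phi x (i, f)) A.
rewrite -imset_comp -im_A' card_in_imset // in large_im.
exists i, f, A'; split=> // a a' A'a A'a'; apply: contra => eq_d.
by apply/eqP/inj_A'; rewrite //= !ffunE; apply/eqP.
Qed.

Definition band_nbhd c d (i : 'I_d) (f : bool) (a : cube d m) : {set cube d m} :=
  [set x : cube d m | band_at c (digits f (a i)) (digits f (x i))].

Lemma card_band_nbhd c d i f a : (c <= p)%N ->
  #|@band_nbhd c d i f a| = (p * c * m ^ d.-1)%N.
Proof.
move=> le_cp.
rewrite (card_ffun_coord i (fun w : 'I_m => band_at c (digits f (a i)) (digits f w))) !card_ord.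
by rewrite (card_digits_preim f (band_at c _)) card_band_at.
Qed.

(* [w] encodes the integer [w - m], as in [scube]; [e] selects the representative
   [z.k] or [z.k - p] of each digit difference. *)
Definition diff_band c (f : bool) : {set 'I_(2 * m)} :=
  [set w : 'I_(2 * m) | [exists z : 'I_p * 'I_p, exists e : bool * bool,
     band_at c (ord0, ord0) z &&
     ((w : nat)%:Z - m%:Z == undigits f ((z.1 : nat)%:Z - (e.1 : nat)%:Z * p%:Z)
                                        ((z.2 : nat)%:Z - (e.2 : nat)%:Z * p%:Z))]].

Definition band_cover c d : {set scube d m} :=
  \bigcup_(i : 'I_d) \bigcup_(f : bool) [set b : scube d m | b i \in diff_band c f].

Lemma card_diff_band c f : (c <= p)%N -> (#|diff_band c f| <= 4 * p * c)%N.
Proof.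
move=> le_cp.
have m2_gt0 : (0 < 2 * m)%N by rewrite !muln_gt0.
pose k (ze : ('I_p * 'I_p) * (bool * bool)) : 'I_(2 * m) := insubd (Ordinal m2_gt0)
  (absz (undigits f ((ze.1.1 : nat)%:Z - (ze.2.1 : nat)%:Z * p%:Z)
                    ((ze.1.2 : nat)%:Z - (ze.2.2 : nat)%:Z * p%:Z) + m%:Z)).
apply: (@leq_trans #|k @: setX [set z | band_at c (ord0, ord0) z] [set: bool * bool]|).
  apply/subset_leq_card/subsetP => w; rewrite inE => /existsP[z /existsP[e /andP[zB /eqP eq_w]]].
  apply/imsetP; exists (z, e); first by rewrite !inE zB.
  by apply: val_inj; rewrite /k /= -eq_w subrK absz_nat val_insubd ltn_ord.
apply: leq_trans (leq_imset_card _ _) _.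
by rewrite cardsX card_band_at // cardsT card_prod card_bool mulnC mulnA.
Qed.

Lemma card_band_cover c d : (c <= p)%N ->
  (#|band_cover c d| <= 8 * d * 2 ^ d.-1 * c * p * m ^ d.-1)%N.
Proof.
move=> le_cp; apply: leq_trans (card_bigcup_leq_sum _ _) _.
apply: (@leq_trans (\sum_(i : 'I_d) \sum_(f : bool) 4 * p * c * (2 * m) ^ d.-1)%N).
  apply: leq_sum => i _; apply: leq_trans (card_bigcup_leq_sum _ _) _.
  apply: leq_sum => f _; rewrite (card_ffun_coord i (mem (diff_band c f))) !card_ord.
  by rewrite leq_mul2r cardsE card_diff_band ?orbT.
rewrite !sum_nat_const card_ord card_bool expnMn; apply: eq_leq; ring.
Qed.

Lemma diff_band_sub c f (x a : 'I_m) (w : 'I_(2 * m)) :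
  (w : nat)%:Z - m%:Z = (x : nat)%:Z - (a : nat)%:Z ->
  band_at c (digits f a) (digits f x) -> w \in diff_band c f.
Proof.
move=> eq_w xB.
set d1 := ((digits f x).1 : nat)%:Z - ((digits f a).1 : nat)%:Z in xB.
set d2 := ((digits f x).2 : nat)%:Z - ((digits f a).2 : nat)%:Z in xB.
have d1_small : - p%:Z < d1 < p%:Z.
  by have := ltn_ord (digits f x).1; have := ltn_ord (digits f a).1; lia.
have d2_small : - p%:Z < d2 < p%:Z.
  by have := ltn_ord (digits f x).2; have := ltn_ord (digits f a).2; lia.
rewrite inE; apply/existsP; exists (modz_ord d1, modz_ord d2).
apply/existsP; exists (d1 < 0, d2 < 0); apply/andP; split.
  by rewrite /band_at /= !subr0 !modz_ord_small // pband_shift.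
rewrite /= !modz_ord_small // !addrK eq_w (digitsK f (ltn_ord x)) (digitsK f (ltn_ord a)).
by rewrite undigitsB.
Qed.

Lemma ord_sub_shift_lt (x a : 'I_m) : (x + m - a < 2 * m)%N.
Proof. by have := ltn_ord x; lia. Qed.

Definition scube_sub d (x a : cube d m) : scube d m :=
  [ffun j => Ordinal (ord_sub_shift_lt (x j) (a j))].

Lemma scube_val_sub d (x a : cube d m) j :
  scube_val (scube_sub x a) j = (x j : nat)%:Z - (a j : nat)%:Z.
Proof.
rewrite /scube_val ffunE /= -subzn ?PoszD; last exact: leq_trans (ltnW (ltn_ord _)) (leq_addl _ _).
by ring.
Qed.

Lemma band_nbhd_sub c d i f (A : {set cube d m}) a :
  a \in A -> band_nbhd c i f a \subset sumset_cap_cube A (band_cover c d).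
Proof.
move=> Aa; apply/subsetP => x; rewrite inE => xB.
rewrite inE; apply/existsP; exists a; rewrite Aa; apply/existsP; exists (scube_sub x a).
apply/andP; split; last by apply/forallP => j; rewrite scube_val_sub addrC subrK.
apply/bigcupP; exists i => //; apply/bigcupP; exists f => //; rewrite inE.
by apply: diff_band_sub xB; rewrite -scube_val_sub.
Qed.

Lemma card_band_nbhd_cap c d i f (a a' : cube d m) :
  (digits f (a i)).1 != (digits f (a' i)).1 -> (c <= p)%N ->
  #|band_nbhd c i f a :&: band_nbhd c i f a'| = (c * c * m ^ d.-1)%N.
Proof.
move=> ne_aa' le_cp.
pose P z := band_at c (digits f (a i)) z && band_at c (digits f (a' i)) z.
have -> : band_nbhd c i f a :&: band_nbhd c i f a' = [set x : cube d m | P (digits f (x i))].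
  by apply/setP => x; rewrite !inE.
by rewrite (card_ffun_coord i (fun w : 'I_m => P (digits f w))) !card_ord
           (card_digits_preim f P) card_band_at_cap.
Qed.

Theorem card_sumset_band_cover c d L (A : {set cube d m}) :
  (c <= p)%N -> (0 < d)%N -> (L ^ (2 * d) <= #|A|)%N ->
  (L * c * m ^ d <= #|sumset_cap_cube A (band_cover c d)| * (p + L * c))%N.
Proof.
move=> le_cp d_gt0 large_A.
have [i [f [A' [sub_A' large_A' sep_A']]]] := exists_digit_transversal d_gt0 large_A.
set U := #|sumset_cap_cube A _|; set n := #|A'|; set M := (m ^ d.-1)%N.
apply: (leq_mul_ratio_mono (leq_mul large_A' (leqnn c))).
have cover : \bigcup_(a in A') band_nbhd c i f a \subset sumset_cap_cube A (band_cover c d).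
  by apply/bigcupsP => a A'a; apply/band_nbhd_sub/(subsetP sub_A').
have small_cap : {in A' &, forall a a' : cube d m, a != a' ->
    (#|band_nbhd c i f a :&: band_nbhd c i f a'| <= c * c * M)%N}.
  by move=> a a' A'a A'a' ne_aa'; rewrite card_band_nbhd_cap ?sep_A'.
have := card_bigcup_second_moment small_cap.
rewrite (eq_bigr (fun=> p * c * M)%N) => [|a _]; last exact: card_band_nbhd.
rewrite sum_nat_const -/n => /leq_trans/(_ (leq_mul (subset_leq_card cover) (leqnn _))) moment.
have [nc0 | nc_gt0] := posnP (n * c); first by rewrite nc0.
have ncM_gt0 : (0 < n * c * M)%N by rewrite muln_gt0 nc_gt0 expn_gt0 muln_gt0.
have md : (m ^ d = m * M)%N by rewrite -expnS prednK.
rewrite -(leq_pmul2l ncM_gt0) md.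
have -> : (n * c * M * (n * c * (m * M)) = (n * (p * c * M)) ^ 2)%N by ring.
have -> : (n * c * M * (U * (p + n * c)) = U * (n * (p * c * M) + n ^ 2 * (c * c * M)))%N by ring.
exact: moment.
Qed.

End ParabolaBand.

Lemma le_one_sub_of_ratio (R : realFieldType) (eps p x M U : R) :
  0 <= eps -> 0 <= p -> 0 < x -> 0 <= M ->
  p <= eps * x -> x * M <= U * (p + x) -> (1 - eps) * M <= U.
Proof.
move=> eps_ge0 p_ge0 x_gt0 M_ge0 p_le xM_le.
have px_gt0 : 0 < p + x by lra.
rewrite -(ler_pM2r px_gt0); apply: le_trans xM_le.
have : (1 - eps) * (p + x) <= x by nra.
by move/(ler_wpM2l M_ge0); lra.
Qed.

Lemma exists_band_width (R : archiRealFieldType) (eta eps : R) (K L p : nat) :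
  0 < eta <= 1 -> 0 < eps -> (0 < K)%N ->
  2 * K%:R < L%:R * (eta * eps) -> 2 * K%:R < eta * p%:R ->
  exists c : nat, [/\ c%:R * K%:R <= eta * p%:R, (0 < c <= p)%N & p%:R <= eps * (L * c)%:R].
Proof.
move=> /andP[eta_gt0 eta_le1] eps_gt0 K_gt0 L_big p_big.
have K_ge1 : 1 <= K%:R :> R by rewrite ler1n.
pose c := Num.Def.truncn (eta * p%:R / K%:R); exists c.
have cK_le : c%:R * K%:R <= eta * p%:R.
  by rewrite -ler_pdivlMr ?truncn_le ?divr_ge0 ?mulr_ge0 ?ler0n ?ltW ?ltr0n.
have cK_gt : eta * p%:R < (c%:R + 1) * K%:R.
  by rewrite natr1 -ltr_pdivrMr ?truncnS_gt ?ltr0n.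
have c_gt1 : (1 < c)%N by rewrite -(ltr_nat R); nra.
have c_ge2 : 2 <= c%:R :> R by rewrite (ler_nat R 2).
split=> //; first by rewrite ltnW // -(ler_nat R); nra.
by rewrite natrM; nra.
Qed.

Lemma card_band_cover_le (R : numDomainType) (eta : R) q c d :
  (0 < d)%N -> (c <= q.+1)%N -> c%:R * (8 * d * 2 ^ d.-1)%:R <= eta * q.+1%:R ->
  #|band_cover q c d|%:R <= eta * ((q.+1 * q.+1) ^ d)%:R.
Proof.
move=> d_gt0 le_cp cK_le; set X := (q.+1 * (q.+1 * q.+1) ^ d.-1)%N.
have -> : ((q.+1 * q.+1) ^ d = q.+1 * X)%N by rewrite mulnA -expnS prednK.
rewrite natrM mulrA; apply: le_trans (ler_wpM2r (ler0n _ X) cK_le).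
rewrite -!natrM ler_nat; apply: leq_trans (card_band_cover d le_cp) _.
by apply: eq_leq; rewrite /X; ring.
Qed.

Theorem corollary4p5 (R : realType) (d : nat) (eta eps : R) :
  (1 <= d)%N ->
  (0 < eta)%R -> (eta <= 1 / 3)%R ->
  (0 < eps)%R -> (eps <= 1 / 3)%R ->
  exists N : nat,
    forall M : nat, exists m : nat, (M < m)%N /\
      exists B : {set scube d m},
        (#|B|%:R <= eta * (m ^ d)%:R)%R /\
        forall A : {set cube d m}, (N <= #|A|)%N ->
          ((1 - eps) * (m ^ d)%:R <= #|sumset_cap_cube A B|%:R)%R.
Proof.
move=> d_gt0 eta_gt0 eta_le eps_gt0 _.
pose K := (8 * d * 2 ^ d.-1)%N.
have K_gt0 : (0 < K)%N by rewrite !muln_gt0 d_gt0 expn_gt0.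
pose L := (Num.Def.truncn (2 * K%:R / (eta * eps))).+1.
have L_big : 2 * K%:R < L%:R * (eta * eps) by rewrite -ltr_pdivrMr ?mulr_gt0 // truncnS_gt.
pose P0 := (Num.Def.truncn (2 * K%:R / eta)).+1.
exists (L ^ (2 * d))%N => M.
have [[|q] /[!gtn_max] /and3P[lt_Mp lt_P0p lt_2p] p_prime] :=
  prime_above (maxn M (maxn P0 2)) => //.
have p_big : 2 * K%:R < eta * q.+1%:R.
  apply: lt_le_trans (_ : P0%:R * eta <= _); first by rewrite -ltr_pdivrMr // truncnS_gt.
  by rewrite mulrC ler_pM2l // ler_nat ltnW.
have eta_01 : 0 < eta <= 1 by rewrite eta_gt0 /=; lra.
have [c [cK_le /andP[c_gt0 le_cp] p_le]] := exists_band_width eta_01 eps_gt0 K_gt0 L_big p_big.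
exists (q.+1 * q.+1)%N; split; first by apply: leq_trans lt_Mp (leq_pmulr _ _).
exists (band_cover q c d); split; first exact: card_band_cover_le.
move=> A large_A; apply: (le_one_sub_of_ratio (x := (L * c)%:R) (p := q.+1%:R)) => //.
- exact: ltW.
- by rewrite ltr0n muln_gt0 c_gt0.
- by rewrite -natrM -natrD -natrM ler_nat card_sumset_band_cover.
Qed.
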